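(* Let $K_m$ and $L_n$ be regular languages over the same alphabet $\Sigma$ with state complexities $m$ and $n$ respectively. Then the state complexities of $K_m\setminus L_n^R$ and of $L_n^R\setminus K_m$ are each at most $m2^n-(m-1)$, and the state complexity of $K_m\oplus L_n^R$ is at most $m2^n$.
   Context: The state complexity of a regular language is the number of states of its minimal complete deterministic finite automaton. $L^R$ denotes the reversal of $L$, i.e. the set of all words of $L$ written backwards. $K\setminus L$ is set difference and $K\oplus L=(K\setminus L)\cup(L\setminus K)$ is symmetric difference. *)

From mathcomp Require Import all_boot.
Set Implicit Arguments. Unset Strict Implicit. Unset Printing Implicit Defensive.

Definition lang (Sigma : Type) := seq Sigma -> Prop.

Record dfa (Sigma : Type) := DFA {
  dfa_state :> finType;
  dfa_start : dfa_state;
  dfa_trans : dfa_state -> Sigma -> dfa_state;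
  dfa_final : pred dfa_state }.

Definition dfa_accept Sigma (A : dfa Sigma) (w : seq Sigma) : bool :=
  @dfa_final Sigma A (foldl (@dfa_trans Sigma A) (dfa_start A) w).

Definition recognizes Sigma (A : dfa Sigma) (L : lang Sigma) : Prop :=
  forall w, L w <-> dfa_accept A w.

Definition has_sc Sigma (L : lang Sigma) (m : nat) : Prop :=
  (exists A : dfa Sigma, recognizes A L /\ #|dfa_state A| = m) /\
  (forall A : dfa Sigma, recognizes A L -> m <= #|dfa_state A|).

Definition sc_le Sigma (L : lang Sigma) (k : nat) : Prop :=
  exists A : dfa Sigma, recognizes A L /\ #|dfa_state A| <= k.

Definition lang_rev Sigma (L : lang Sigma) : lang Sigma := fun w => L (rev w).
Definition lang_diff Sigma (K L : lang Sigma) : lang Sigma := fun w => K w /\ ~ L w.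
Definition lang_symdiff Sigma (K L : lang Sigma) : lang Sigma :=
  fun w => lang_diff K L w \/ lang_diff L K w.

From mathcomp Require Import all_boot.
From mathcomp Require Import zify.

Set Implicit Arguments. Unset Strict Implicit.

(* Let A (m states) recognise K and B (n states) recognise L.
   A word w is in L^R iff B accepts rev w, i.e. iff the start state of B
   lies in the set of states q from which B accepts rev w.  That set is
   updated letter by letter by taking preimages under B's transition, so
   the product of A with the power set of B's states, read forwards,
   tracks both "A accepts w" and "B accepts rev w"; any boolean
   combination of the two is therefore recognised with m * 2^n states.
   This gives the bound for the symmetric difference.  For the two
   differences, the layer {(p, S0) | p in A} with S0 = setT (resp. set0)
   is closed under transitions and contains no accepting state; merging
   a closed non-accepting set of states into a single sink saves
   m - 1 states, giving m * 2^n - (m - 1). *)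

Lemma dfa_card_gt0 Sigma (A : dfa Sigma) : 0 < #|dfa_state A|.
Proof. by apply/card_gt0P; exists (dfa_start A). Qed.

Lemma card_setT_pow (T : finType) : #|{: {set T}}| = 2 ^ #|T|.
Proof. by rewrite -(@cardsT {set T}) -powersetT card_powerset cardsT. Qed.

Section Sink.
Variables (Sigma : Type) (A : dfa Sigma) (D : {set A}).
Hypothesis D_closed : forall x a, x \in D -> dfa_trans x a \in D.
Hypothesis D_rejecting : forall x, x \in D -> ~~ dfa_final x.

(* [None] is the sink; [Some x] is a live state x outside D. *)
Definition sink_state := option {x : A | x \notin D}.
Definition to_sink (x : A) : sink_state := insub x.
Definition sink_trans (s : sink_state) (a : Sigma) : sink_state :=
  if s is Some y then to_sink (dfa_trans (val y) a) else None.
Definition sink_final (s : sink_state) : bool :=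
  if s is Some y then dfa_final (val y) else false.
Definition sink_dfa : dfa Sigma :=
  @DFA Sigma sink_state (to_sink (dfa_start A)) sink_trans sink_final.

Lemma run_dead w x : x \in D -> foldl (@dfa_trans Sigma A) x w \in D.
Proof. by elim: w x => //= a w IH x Dx; apply/IH/D_closed. Qed.

Lemma to_sink_dead x : x \in D -> to_sink x = None.
Proof. by move=> Dx; rewrite /to_sink insubF // Dx. Qed.

Lemma run_sink_None w : foldl sink_trans None w = None.
Proof. by elim: w. Qed.

Lemma run_to_sink w x :
  foldl sink_trans (to_sink x) w = to_sink (foldl (@dfa_trans Sigma A) x w).
Proof.
elim: w x => //= a w IH x; have [Dx | Dx] := boolP (x \in D).
  by rewrite !to_sink_dead ?run_sink_None //; apply/run_dead/D_closed.
by rewrite {1}/to_sink insubT /= IH.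
Qed.

Lemma sink_final_to_sink x : sink_final (to_sink x) = dfa_final x.
Proof.
have [Dx | Dx] := boolP (x \in D); last by rewrite /to_sink insubT.
by rewrite to_sink_dead //; apply/esym/negbTE/D_rejecting.
Qed.

Lemma sink_dfa_accept w : dfa_accept sink_dfa w = dfa_accept A w.
Proof. by rewrite /dfa_accept /= run_to_sink sink_final_to_sink. Qed.

Lemma sink_dfa_card : #|dfa_state sink_dfa| = #|A| - #|D| + 1.
Proof.
rewrite /= card_option card_sig -(cardsC D) addKn addn1.
by congr _.+1; apply: eq_card => x; rewrite !inE.
Qed.
End Sink.

Section RevProduct.
Variables (Sigma : Type) (A B : dfa Sigma) (f : bool -> bool -> bool).

Definition rev_state : finType := (dfa_state A * {set dfa_state B})%type.
Definition preim_trans (S : {set B}) (a : Sigma) : {set B} :=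
  [set q | dfa_trans q a \in S].
Definition rev_trans (s : rev_state) (a : Sigma) : rev_state :=
  (dfa_trans s.1 a, preim_trans s.2 a).
Definition rev_start : rev_state := (dfa_start A, [set q | dfa_final q]).
Definition rev_dfa : dfa Sigma :=
  @DFA Sigma rev_state rev_start rev_trans
    (fun s => f (dfa_final s.1) (dfa_start B \in s.2)).

Lemma rev_run w : foldl rev_trans rev_start w =
  (foldl (@dfa_trans Sigma A) (dfa_start A) w,
   [set q | dfa_final (foldl (@dfa_trans Sigma B) q (rev w))]).
Proof.
elim/last_ind: w => // w a IH.
rewrite !foldl_rcons IH rev_rcons /rev_trans /=; congr (_, _).
by apply/setP => q; rewrite !inE.
Qed.

Lemma rev_dfa_accept w :
  dfa_accept rev_dfa w = f (dfa_accept A w) (dfa_accept B (rev w)).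
Proof. by rewrite /dfa_accept /= rev_run /= inE. Qed.

Lemma rev_dfa_card : #|dfa_state rev_dfa| = #|A| * 2 ^ #|B|.
Proof. by rewrite /= card_prod card_setT_pow. Qed.

Variable S0 : {set B}.
Hypothesis S0_fixed : forall a, preim_trans S0 a = S0.
Hypothesis S0_rejected : forall b, ~~ f b (dfa_start B \in S0).

Definition rev_layer : {set rev_dfa} := setX [set: A] [set S0].

Lemma rev_layer_closed (x : rev_dfa) a :
  x \in rev_layer -> dfa_trans x a \in rev_layer.
Proof. by case: x => p S; rewrite !inE /= => /eqP ->; rewrite S0_fixed. Qed.

Lemma rev_layer_rejecting (x : rev_dfa) : x \in rev_layer -> ~~ dfa_final x.
Proof. by case: x => p S; rewrite !inE /= => /eqP ->; apply: S0_rejected. Qed.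

Lemma rev_layer_card : #|rev_layer| = #|A|.
Proof. by rewrite cardsX cardsT cards1 muln1. Qed.
End RevProduct.

Lemma preim_trans_setT Sigma (B : dfa Sigma) a : preim_trans [set: B] a = setT.
Proof. by apply/setP => q; rewrite !inE. Qed.

Lemma preim_trans_set0 Sigma (B : dfa Sigma) a : preim_trans (set0 : {set B}) a = set0.
Proof. by apply/setP => q; rewrite !inE. Qed.

Lemma sc_le_rev_comb Sigma (A B : dfa Sigma) (f : bool -> bool -> bool)
    (M : lang Sigma) :
  (forall w, M w <-> f (dfa_accept A w) (dfa_accept B (rev w))) ->
  sc_le M (#|A| * 2 ^ #|B|).
Proof.
move=> defM; exists (rev_dfa A B f); rewrite rev_dfa_card; split=> // w.
by rewrite rev_dfa_accept.
Qed.

Lemma sc_le_rev_comb_sink Sigma (A B : dfa Sigma) (f : bool -> bool -> bool)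
    (M : lang Sigma) (S0 : {set B}) :
  (forall a, preim_trans S0 a = S0) ->
  (forall b, ~~ f b (dfa_start B \in S0)) ->
  (forall w, M w <-> f (dfa_accept A w) (dfa_accept B (rev w))) ->
  sc_le M (#|A| * 2 ^ #|B| - #|A| + 1).
Proof.
move=> fixS0 rejS0 defM.
have closed := rev_layer_closed (A := A) (f := f) fixS0.
have rejecting := rev_layer_rejecting (A := A) rejS0.
exists (sink_dfa (rev_layer A f S0)); split=> [w|].
  by rewrite defM (sink_dfa_accept closed rejecting) rev_dfa_accept.
by rewrite sink_dfa_card rev_layer_card rev_dfa_card.
Qed.

Lemma layer_count m n : 0 < m -> m * 2 ^ n - m + 1 = m * 2 ^ n - (m - 1).
Proof.
move=> m_gt0; have : m <= m * 2 ^ n by rewrite leq_pmulr // expn_gt0.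
lia.
Qed.

Theorem proposition1 (Sigma : finType) (K L : lang Sigma) (m n : nat) :
  has_sc K m -> has_sc L n ->
  sc_le (lang_diff K (lang_rev L)) (m * 2 ^ n - (m - 1)) /\
  sc_le (lang_diff (lang_rev L) K) (m * 2 ^ n - (m - 1)) /\
  sc_le (lang_symdiff K (lang_rev L)) (m * 2 ^ n).
Proof.
move=> [[A [RA <-]] _] [[B [RB <-]] _].
rewrite -layer_count ?dfa_card_gt0 //.
have accK w : K w <-> dfa_accept A w := RA w.
have accLR w : lang_rev L w <-> dfa_accept B (rev w) := RB (rev w).
split; [|split].
- apply: (sc_le_rev_comb_sink (f := fun k l => k && ~~ l)
    (@preim_trans_setT _ B)) => [b | w]; first by rewrite inE andbF.
  rewrite /lang_diff accK accLR.
  by case: (dfa_accept A w); case: (dfa_accept B _); intuition.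
- apply: (sc_le_rev_comb_sink (f := fun k l => l && ~~ k)
    (@preim_trans_set0 _ B)) => [b | w]; first by rewrite inE.
  rewrite /lang_diff accK accLR.
  by case: (dfa_accept A w); case: (dfa_accept B _); intuition.
- apply: (sc_le_rev_comb (f := fun k l => k != l)) => w.
  rewrite /lang_symdiff /lang_diff accK accLR.
  by case: (dfa_accept A w); case: (dfa_accept B _); intuition.
Qed.
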